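(* With $\theta$ and $\widehat\Theta$ as in the context, $(X_\theta,S)$ is a topological factor of $(X_{\widehat\Theta},S)$, i.e. there is a continuous surjection $\pi:X_{\widehat\Theta}\to X_\theta$ with $\pi\circ S=S\circ\pi$.
   Context: For a primitive substitution $\zeta$ over an alphabet $\mathbb{B}$, $X_\zeta\subset\mathbb{B}^{\mathbb{Z}}$ is the set of sequences all of whose finite blocks occur in some iterate $\zeta^k(b)$, and $S$ is the left shift. Let $\theta:\mathbb{A}\to\mathbb{A}^\lambda$ ($\lambda\ge2$) be primitive, injective on letters, with infinite subshift, $c=c(\theta)=\min_{k\ge1,0\le j<\lambda^k}|\{\theta^k(a)_j:a\in\mathbb{A}\}|$. Let $\mathcal{X}$ be the set of $M\subset\mathbb{A}$ with $|M|=c$ and $M=\{\theta^k(a)_j:a\in\mathbb{A}\}$ for some $k\ge1$, $j<\lambda^k$; $\widetilde\theta(M)_j:=\{\theta(a)_j:a\in M\}\in\mathcal{X}$, and $a\mapsto\theta(a)_j$ is a bijection $M\to\widetilde\theta(M)_j$. Assume (after passing to a power) $a_0\in M_0\in\mathcal{X}$ with $\theta(a_0)_0=a_0$, $\widetilde\theta(M_0)_0=M_0$. Fix a total order on $M_0$ with minimum $a_0$, and $k_0\ge1$, $j_0<\lambda^{k_0}$ with $\theta^{k_0}(a)_{j_0}=a$ ($a\in M_0$) and $\widetilde\theta^{k_0}(M)_{j_0}=M_0$ ($M\in\mathcal{X}$). Order each $M$ by $a<b$ iff $\theta^{k_0}(a)_{j_0}<\theta^{k_0}(b)_{j_0}$;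 $e_M(i)$ is the $(i+1)$-th smallest element of $M$. $\widetilde\Theta(i,M)_j=(i',\widetilde\theta(M)_j)$ where $\theta(e_M(i))_j=e_{\widetilde\theta(M)_j}(i')$; $\sigma_{M,j}\in\mathcal{S}_c$ is defined by $\sigma_{M,j}(m)=n$ iff $\widetilde\Theta(n,M)_j=(m,\widetilde\theta(M)_j)$; $G=\langle\sigma_{M,j}\rangle\le\mathcal{S}_c$; $\widehat\Theta:G\times\mathcal{X}\to(G\times\mathcal{X})^\lambda$, $\widehat\Theta(\sigma,M)_j=(\sigma\circ\sigma_{M,j},\widetilde\theta(M)_j)$ (a primitive substitution). *)

From HB Require Import structures.
From mathcomp Require Import all_boot all_order all_algebra all_fingroup.
From Stdlib Require Import ClassicalEpsilon.
From Stdlib Require List.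
Set Implicit Arguments. Unset Strict Implicit. Unset Printing Implicit Defensive.
Import GRing.Theory Num.Theory.

Definition sapp (B : Type) (z : B -> seq B) (w : seq B) : seq B := flatten (map z w).
Definition spow (B : Type) (z : B -> seq B) (k : nat) (w : seq B) : seq B := iter k (sapp z) w.

Definition block (B : Type) (x : int -> B) (i : int) (n : nat) : seq B :=
  [seq x (i + (k%:Z))%R | k <- iota 0 n].

(* X_z over the alphabet D (a predicate on B): all finite blocks occur in some z^k(b), b in D *)
Definition Xsub (B : eqType) (z : B -> seq B) (D : B -> Prop) (x : int -> B) : Prop :=
  forall (i : int) (n : nat), exists b k, D b /\ infix (block x i n) (spow z k [:: b]).

Definition Xsubst (B : eqType) (z : B -> seq B) := Xsub z (fun _ => True).

Definition shift (B : Type) (x : int -> B) : int -> B := fun n => x (n + 1)%R.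

Definition primitive (B : finType) (z : B -> seq B) : Prop :=
  exists k, 0 < k /\ forall a b : B, b \in spow z k [:: a].

Definition infinite_set (T : Type) (P : T -> Prop) : Prop :=
  ~ exists l : list T, forall x, P x -> List.In x l.

Definition continuous_on (B C : Type) (P : (int -> B) -> Prop) (f : (int -> B) -> int -> C) :=
  forall x, P x -> forall n : int, exists N : nat,
    forall y, P y -> (forall m : int, (absz m <= N)%N -> y m = x m) -> f y n = f x n.

Definition top_factor (B C : Type) (X : (int -> B) -> Prop) (Y : (int -> C) -> Prop) : Prop :=
  exists pi : (int -> B) -> int -> C,
    [/\ forall x, X x -> Y (pi x),
        forall y, Y y -> exists2 x, X x & pi x =1 y,
        forall x, X x -> pi (shift x) =1 shift (pi x)
      & continuous_on X pi].

Definition pb (P : Prop) : bool := if excluded_middle_informative P then true else false.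

Section Construction.
Variables (A : finType) (theta : A -> seq A) (lam c : nat).

Definition thpow (k j : nat) (a : A) : A := nth a (spow theta k [:: a]) j.

Definition colset (k j : nat) : {set A} := [set thpow k j a | a in A].

Definition is_c_theta : Prop :=
  (exists k j, 0 < k /\ j < lam ^ k /\ #|colset k j| = c) /\
  (forall k j, 0 < k -> j < lam ^ k -> c <= #|colset k j|).

Definition isX (M : {set A}) : Prop :=
  #|M| = c /\ exists k j, 0 < k /\ j < lam ^ k /\ M = colset k j.

Definition Xset : {set {set A}} := [set M | pb (isX M)].

Definition thetil_j (M : {set A}) (j : nat) : {set A} := [set nth a (theta a) j | a in M].
Definition thetil (M : {set A}) : seq {set A} := [seq thetil_j M j | j <- iota 0 lam].

Variables (a0 : A) (s0 : seq A) (k0 j0 : nat).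
(* s0 lists M0 in increasing order; the order on each M: a < b iff
   theta^k0(a)_j0 < theta^k0(b)_j0 (in the order of M0) *)
Definition key (a : A) : nat := index (thpow k0 j0 a) s0.
Definition sortM (M : {set A}) : seq A := sort (fun a b => key a <= key b) (enum M).
Definition e_ (M : {set A}) (i : nat) : A := nth a0 (sortM M) i.

(* first component of tilde Theta(n,M)_j *)
Definition tau (M : {set A}) (j : nat) (n : 'I_c) : 'I_c :=
  insubd n (index (nth (e_ M n) (theta (e_ M n)) j) (sortM (thetil_j M j))).

Definition sigma (M : {set A}) (j : nat) : {perm 'I_c} :=
  odflt 1%g [pick s : {perm 'I_c} | [forall m, forall n, (s m == n) == (tau M j n == m)]].

Definition Ggrp : {set {perm 'I_c}} :=
  <<[set sigma M (nat_of_ord j) | M in Xset, j in 'I_lam]>>%g.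

(* widehat Theta(s,M)_j = (s o sigma_{M,j}, tilde theta(M)_j);
   note (t * s) x = s (t x) for permutations in mathcomp *)
Definition ThetaHat (b : {perm 'I_c} * {set A}) : seq ({perm 'I_c} * {set A}) :=
  [seq ((sigma b.2 j * b.1)%g, thetil_j b.2 j) | j <- iota 0 lam].

Definition hatAlph (b : {perm 'I_c} * {set A}) : Prop := b.1 \in Ggrp /\ isX b.2.

End Construction.

From Pilot Require Import Defs.
From mathcomp Require Import all_boot all_order all_algebra all_fingroup.
From mathcomp Require Import zify.
From Stdlib Require Import ClassicalEpsilon Classical.

Set Implicit Arguments. Unset Strict Implicit. Unset Printing Implicit Defensive.

(** Fix a sheet [z < c]. The letter map [(s, M) |-> e_M(s^-1 z)] intertwines the two
    substitutions: [sigma_{M,j}] inverts the first component of [Theta~(., M)_j], so the letter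
    of [ThetaHat(s, M)_j = (s o sigma_{M,j}, theta~(M)_j)] is [theta(e_M(s^-1 z))_j].
    A letter-to-letter map intertwining two substitutions is a continuous, shift-commuting map
    [X_ThetaHat -> X_theta]. It is onto: by primitivity of [theta] every block of a point of
    [X_theta] lifts to a block of some [ThetaHat^k(1, M0)], and a compactness (Koenig) argument
    glues these finite lifts into a point of [X_ThetaHat]. *)

Section Substitution.
Variables (B : Type) (z : B -> seq B).

Lemma sapp_cat u v : sapp z (u ++ v) = sapp z u ++ sapp z v.
Proof. by rewrite /sapp map_cat flatten_cat. Qed.

Lemma spowS k w : spow z k.+1 w = sapp z (spow z k w).
Proof. by []. Qed.

Lemma spow_cat k u v : spow z k (u ++ v) = spow z k u ++ spow z k v.
Proof. by elim: k => //= k IH; rewrite -/(spow z k _) IH sapp_cat. Qed.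

Lemma spowD k l w : spow z (k + l) w = spow z k (spow z l w).
Proof. exact: iterD. Qed.

Variable lam : nat.
Hypothesis size_z : forall b, size (z b) = lam.

Lemma size_sapp w : size (sapp z w) = lam * size w.
Proof.
elim: w => [|b w IH]; first by rewrite muln0.
by rewrite /sapp /= size_cat -/(sapp z w) IH size_z mulnS.
Qed.

Lemma size_spow k w : size (spow z k w) = lam ^ k * size w.
Proof. by elim: k => [|k IH]; rewrite ?mul1n // spowS size_sapp IH expnS mulnA. Qed.

Lemma nth_sapp w d i j : j < lam -> i < size w ->
  nth d (sapp z w) (i * lam + j) = nth d (z (nth d w i)) j.
Proof.
move=> lt_j_lam; elim: w i => [|b w IH] [|i] //= lt_i_w.
  by rewrite /sapp /= nth_cat size_z lt_j_lam.
rewrite /sapp /= nth_cat size_z -/(sapp z w) mulSn -addnA ltnNge leq_addr /=.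
by rewrite addKn IH.
Qed.

End Substitution.

Lemma infix_spow_mem (B : eqType) (z : B -> seq B) k b w :
  b \in w -> infix (spow z k [:: b]) (spow z k w).
Proof.
case/splitPr=> w1 w2; rewrite spow_cat (_ : b :: w2 = [:: b] ++ w2) // spow_cat.
exact: infix_infix.
Qed.

Lemma infix_map (T U : eqType) (f : T -> U) u v :
  infix u v -> infix (map f u) (map f v).
Proof.
by move/infixP=> [s [s' ->]]; apply/infixP; exists (map f s), (map f s'); rewrite !map_cat.
Qed.

Lemma infix_map_preimage (T U : eqType) (f : T -> U) u w :
  infix u (map f w) -> exists2 w', infix w' w & map f w' = u.
Proof.
move/infixP=> [s [s' E]]; exists (take (size u) (drop (size s) w)).
  exact: infix_trans (infix_take _ _) (infix_drop _ _).
by rewrite map_take map_drop E drop_size_cat // take_size_cat.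
Qed.

Lemma block_map (B C : Type) (f : B -> C) (x : int -> B) i n :
  block (fun k => f (x k)) i n = map f (block x i n).
Proof. by rewrite /block -map_comp. Qed.

Lemma eq_block (B : Type) (x y : int -> B) i n :
  (forall k, k < n -> x (i + k%:Z)%R = y (i + k%:Z)%R) -> block x i n = block y i n.
Proof. by move=> Exy; apply/eq_in_map => k; rewrite mem_iota => /andP[_]; apply: Exy. Qed.

Lemma block_nth (B : Type) (d : B) (w : seq B) (m : nat) i n :
  (0 <= i + m%:Z)%R -> absz (i + m%:Z)%R + n <= size w ->
  block (fun k => nth d w (absz (k + m%:Z)%R)) i n = take n (drop (absz (i + m%:Z)%R) w).
Proof.
move=> i_ge le_w; apply: (@eq_from_nth _ d).
  by rewrite size_map size_iota size_take size_drop; case: ifP => //; lia.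
move=> k; rewrite size_map size_iota => lt_k_n.
rewrite (nth_map 0) ?size_iota // nth_iota // add0n nth_take // nth_drop.
congr nth; lia.
Qed.

Lemma finite_common_bound (F : finType) (Q : F -> nat -> Prop) :
  (forall f m m', m <= m' -> Q f m -> Q f m') ->
  (forall f, exists m, Q f m) -> exists m, forall f, Q f m.
Proof.
move=> Q_up Q_ex; suff [m Qm] : exists m, forall f, f \in enum F -> Q f m.
  by exists m => f; apply: Qm; rewrite mem_enum.
elim: (enum F) => [|f s [m Qm]]; first by exists 0.
have [mf Qmf] := Q_ex f; exists (maxn mf m) => g; rewrite inE => /predU1P[->|gs].
  exact: Q_up (leq_maxl _ _) Qmf.
exact: Q_up (leq_maxr _ _) (Qm _ gs).
Qed.

Section Compactness.
Variable T : finType.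

Definition agree (n : nat) (x y : int -> T) := forall i : int, absz i < n -> x i = y i.

Definition window (n : nat) (x : int -> T) : {ffun 'I_n.*2.+1 -> T} :=
  [ffun k : 'I_n.*2.+1 => x (k%:Z - n%:Z)%R].

Lemma window_agree n x y : window n x = window n y -> agree n.+1 x y.
Proof.
move=> E i lt_i; have lt_k : absz (i + n%:Z)%R < n.*2.+1 by lia.
have := congr1 (fun g : {ffun _ -> T} => g (Ordinal lt_k)) E; rewrite !ffunE /=.
by have -> : ((absz (i + n%:Z)%R)%:Z - n%:Z)%R = i by lia.
Qed.

Variable R : nat -> (int -> T) -> Prop.
Hypothesis R_local : forall m x y, agree m x y -> R m x -> R m y.
Hypothesis R_antitone : forall m m' x, m <= m' -> R m' x -> R m x.

Definition extendable (n : nat) (x : int -> T) :=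
  forall m, exists y, agree n x y /\ R m y.

(* Only finitely many windows of radius [n] exist: if none of them were extendable one step
   further, a common bound would refute the extendability of [x]. *)
Lemma extendable_succ n x :
  extendable n x -> exists y, agree n x y /\ extendable n.+1 y.
Proof.
move=> ext_x; apply: NNPP => no_y.
pose Q (g : {ffun 'I_n.*2.+1 -> T}) m :=
  forall y, window n y = g -> agree n x y -> ~ R m y.
have [M QM] : exists M, forall g, Q g M.
  apply: finite_common_bound => [g m m' le_m Qm y Ey ag Ry|g].
    exact: Qm y Ey ag (R_antitone le_m Ry).
  have [[y1 [Ey1 ag1]]|no_y1] := classic (exists y1, window n y1 = g /\ agree n x y1).
    have [m not_ext] : exists m, ~ exists y, agree n.+1 y1 y /\ R m y.
      by apply: not_all_ex_not => ext1; apply: no_y; exists y1.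
    exists m => y Ey ag Ry; apply: not_ext; exists y; split=> //.
    by apply: window_agree; rewrite Ey Ey1.
  by exists 0 => y Ey ag _; apply: no_y1; exists y.
have [y [ag Ry]] := ext_x M.
exact: QM y erefl ag Ry.
Qed.

Lemma compactness : (forall m, exists x, R m x) -> exists x, forall m, R m x.
Proof.
move=> R_ex.
have next n x : exists y, extendable n x -> agree n x y /\ extendable n.+1 y.
  have [ext_x|] := classic (extendable n x); last by exists x.
  by have [y Hy] := extendable_succ ext_x; exists y.
pose nxt n x := proj1_sig (constructive_indefinite_description _ (next n x)).
have nxtP n x : extendable n x -> agree n x (nxt n x) /\ extendable n.+1 (nxt n x).
  exact: proj2_sig (constructive_indefinite_description _ (next n x)).
have [x0 _] := R_ex 0.
pose xs := fix xs n := if n is n'.+1 then nxt n' (xs n') else x0.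
have ext_xs n : extendable n (xs n).
  elim: n => [|n IH] /=; last by case: (nxtP n _ IH).
  by move=> m; have [y Ry] := R_ex m; exists y.
have agree_xs n m : n <= m -> agree n (xs n) (xs m).
  elim: m => [|m IH]; first by rewrite leqn0 => /eqP->.
  rewrite leq_eqVlt => /predU1P[->//|lt_n_m] i lt_i.
  rewrite IH //=; case: (nxtP m _ (ext_xs m)) => ag _; apply: ag.
  exact: leq_trans lt_i _.
exists (fun i => xs (absz i).+1 i) => n.
have [y [ag Ry]] := ext_xs n n.
apply: R_local Ry => i lt_i; rewrite -ag //.
by symmetry; apply: agree_xs lt_i _ _.
Qed.
End Compactness.

Section LetterToLetterFactor.
Variables (B C : finType) (z : B -> seq B) (z' : C -> seq C) (D : B -> Prop) (f : B -> C).
Hypothesis D_z : forall b b', D b -> b' \in z b -> D b'.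
Hypothesis f_morph : forall b, D b -> map f (z b) = z' (f b).

Definition admissible (w : seq B) := exists b k, D b /\ infix w (spow z k [:: b]).

Lemma admissible_infix u w : infix u w -> admissible w -> admissible u.
Proof. by move=> uw [b [k [Db wz]]]; exists b, k; split=> //; apply: infix_trans wz. Qed.

Lemma spow_closed k w : {in w, forall b, D b} -> {in spow z k w, forall b, D b}.
Proof.
move=> Dw; elim: k => // k IH b; rewrite spowS => /flattenP[_ /mapP[b' b'k ->]].
exact: D_z (IH _ b'k).
Qed.

Lemma map_spow k w :
  {in w, forall b, D b} -> map f (spow z k w) = spow z' k (map f w).
Proof.
move=> Dw; elim: k => // k IH; rewrite !spowS -IH /sapp map_flatten -!map_comp.
by congr flatten; apply/eq_in_map => b /(spow_closed Dw) Db; apply: f_morph.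
Qed.

Lemma map_spow1 k b : D b -> map f (spow z k [:: b]) = spow z' k [:: f b].
Proof. by move=> Db; apply: map_spow => b'; rewrite inE => /eqP->. Qed.

Lemma Xsub_map x : Xsub z D x -> Xsubst z' (fun i => f (x i)).
Proof.
move=> Xx i n; have [b [k [Db wz]]] := Xx i n.
by exists (f b), k; split=> //; rewrite block_map -map_spow1 //; apply: infix_map.
Qed.

Variable b0 : B.
Hypotheses (D_b0 : D b0) (z'_prim : primitive z').

Lemma admissible_preimage y m :
  Xsubst z' y -> exists2 w, admissible w & map f w = block y (- m%:Z)%R m.*2.
Proof.
move=> Xy; have [p [_ z'p]] := z'_prim.
have [c [k [_ yz']]] := Xy (- m%:Z)%R m.*2.
have : infix (block y (- m%:Z)%R m.*2) (map f (spow z (k + p) [:: b0])).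
  rewrite map_spow1 // spowD; apply: infix_trans yz' (infix_spow_mem _ _ _).
  exact: z'p.
case/infix_map_preimage=> w wz Ew; exists w => //.
by exists b0, (k + p).
Qed.

Lemma Xsub_map_onto y : Xsubst z' y -> exists2 x, Xsub z D x & (fun i => f (x i)) =1 y.
Proof.
move=> Xy.
pose R m (x : int -> B) := agree m (fun i => f (x i)) y /\
  forall i n, (- m%:Z < i)%R -> (i + n%:Z <= m%:Z)%R -> admissible (block x i n).
have [x Rx] : exists x, forall m, R m x.
  apply: compactness => [m x x' ag [fxy adm]|m m' x le_m [fxy adm]|m].
  - split=> [i lt_i|i n lt_i le_n]; first by rewrite -ag // fxy.
    by rewrite -(@eq_block _ x) => [|k lt_k]; [apply: adm | apply: ag; lia].
  - by split=> [i lt_i|i n lt_i le_n]; [apply: fxy | apply: adm]; lia.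
  have [w adm_w Ew] := admissible_preimage m Xy.
  have size_w : size w = m.*2 by rewrite -(size_map f) Ew size_map size_iota.
  exists (fun i => nth b0 w (absz (i + m%:Z)%R)); split=> [i lt_i|i n lt_i le_n].
    rewrite -(nth_map b0 (f b0)) ?size_w; last by lia.
    rewrite Ew (nth_map 0) ?size_iota; last by lia.
    by rewrite nth_iota; [congr y; lia | lia].
  by rewrite block_nth ?size_w; [apply: admissible_infix adm_w; apply: infix_trans
    (infix_take _ _) (infix_drop _ _) | lia | lia].
exists x => [i n|i]; first by case: (Rx (absz i + n).+1) => _; apply; lia.
by case: (Rx (absz i).+1) => fxy _; apply: fxy; lia.
Qed.

Theorem letter_map_top_factor : top_factor (Xsub z D) (Xsubst z').
Proof.
exists (fun x i => f (x i)); split.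
- exact: Xsub_map.
- exact: Xsub_map_onto.
- by [].
- by move=> x _ n; exists (absz n) => y _ Exy; rewrite Exy.
Qed.

End LetterToLetterFactor.

Lemma ltn_mixed_radix i j m n : j < m -> i < n -> i * m + j < n * m.
Proof. by move=> lt_j lt_i; nia. Qed.

Lemma pbT (P : Prop) : P -> pb P.
Proof. by rewrite /pb; case: excluded_middle_informative. Qed.

Section Construction.
Variables (A : finType) (theta : A -> seq A) (lam c : nat).
Hypotheses (size_theta : forall a, size (theta a) = lam) (c_theta : is_c_theta theta lam c).

Lemma thpowS k i j a : j < lam -> i < lam ^ k ->
  thpow theta k.+1 (i * lam + j) a = nth (thpow theta k i a) (theta (thpow theta k i a)) j.
Proof.
move=> lt_j lt_i; rewrite /thpow spowS (nth_sapp size_theta) //; last first.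
  by rewrite (size_spow size_theta) muln1.
by apply: set_nth_default; rewrite size_theta.
Qed.

Lemma thetil_j_colset k i j : j < lam -> i < lam ^ k ->
  thetil_j theta (colset theta k i) j = colset theta k.+1 (i * lam + j).
Proof.
move=> lt_j lt_i; rewrite /thetil_j /colset -imset_comp.
by apply: eq_imset => a /=; rewrite thpowS.
Qed.

Variables (a0 : A) (s0 : seq A) (k0 j0 : nat).
Local Notation sortM := (sortM theta s0 k0 j0).
Local Notation e := (e_ theta a0 s0 k0 j0).
Local Notation tau := (@Defs.tau _ theta c a0 s0 k0 j0).
Local Notation sigma := (sigma theta c a0 s0 k0 j0).

Lemma sortM_uniq (M : {set A}) : uniq (sortM M).
Proof. by rewrite sort_uniq enum_uniq. Qed.

Lemma mem_sortM (M : {set A}) : sortM M =i M.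
Proof. by move=> a; rewrite mem_sort mem_enum. Qed.

Lemma size_sortM (M : {set A}) : size (sortM M) = #|M|.
Proof. by rewrite size_sort cardE. Qed.

Lemma mem_e (M : {set A}) i : i < #|M| -> e M i \in M.
Proof. by move=> lt_i; rewrite -mem_sortM mem_nth ?size_sortM. Qed.

Lemma e_inj (M : {set A}) : {in gtn #|M| &, injective (e M)}.
Proof.
move=> i i' lt_i lt_i' /eqP; rewrite nth_uniq ?size_sortM ?sortM_uniq //.
exact: eqP.
Qed.

Section ColumnSets.
Variables (M : {set A}) (j : nat).
Hypotheses (XM : isX theta lam c M) (lt_j : j < lam).

(* An image of [M], so no larger; a column set, so no smaller than [c]. *)
Lemma card_thetil_j : #|thetil_j theta M j| = c.
Proof.
have [cardM [k [i [k_gt0 [lt_i EM]]]]] := XM; apply/eqP; rewrite eqn_leq.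
apply/andP; split; first by rewrite -cardM leq_imset_card.
by rewrite EM thetil_j_colset //; apply: (proj2 c_theta); rewrite ?expnSr ?ltn_mixed_radix.
Qed.

Lemma isX_thetil_j : isX theta lam c (thetil_j theta M j).
Proof.
split; first exact: card_thetil_j.
have [_ [k [i [k_gt0 [lt_i ->]]]]] := XM; exists k.+1, (i * lam + j).
by rewrite thetil_j_colset // expnSr ltn_mixed_radix.
Qed.

Lemma thetil_j_inj : {in M &, injective (fun a => nth a (theta a) j)}.
Proof. by apply/imset_injP; rewrite card_thetil_j XM.1. Qed.

Lemma tauP (n : 'I_c) : e (thetil_j theta M j) (tau M j n) = nth (e M n) (theta (e M n)) j.
Proof.
have cardM : #|M| = c := XM.1.
have img_n : nth (e M n) (theta (e M n)) j \in thetil_j theta M j.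
  by apply: imset_f; apply: mem_e; rewrite cardM.
rewrite /e_ /tau insubdK ?nth_index ?mem_sortM //.
have := img_n; rewrite -mem_sortM -index_mem size_sortM card_thetil_j.
by rewrite unfold_in.
Qed.

Lemma tau_inj : injective (tau M j).
Proof.
have cardM : #|M| = c := XM.1.
move=> n n' /(congr1 (fun t : 'I_c => e (thetil_j theta M j) t)).
rewrite !tauP => /thetil_j_inj.
rewrite !mem_e ?cardM // => /(_ isT isT) /e_inj; rewrite !unfold_in cardM.
by move=> /(_ (ltn_ord n) (ltn_ord n')) /val_inj.
Qed.

Lemma sigma_tau (n : 'I_c) : sigma M j (tau M j n) = n.
Proof.
rewrite /Defs.sigma; case: pickP => [s /forallP s_tau | no_s].
  by have /forallP/(_ n) := s_tau (tau M j n); rewrite eqxx => /eqP/eqP.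
case/negP: (no_s (perm tau_inj)^-1%g).
apply/forallP => m; apply/forallP => n'; apply/eqP; apply/idP/idP => /eqP E.
  by rewrite -E -(permE tau_inj) permKV.
by rewrite -E -(permE tau_inj) permK.
Qed.

End ColumnSets.

Local Notation ThetaHat := (@Defs.ThetaHat _ theta lam c a0 s0 k0 j0).
Local Notation hatAlph := (@Defs.hatAlph _ theta lam c a0 s0 k0 j0).

Definition hat_proj (z : 'I_c) (b : {perm 'I_c} * {set A}) : A := e b.2 ((b.1^-1)%g z).

Lemma hat_proj_ThetaHat z b :
  isX theta lam c b.2 -> map (hat_proj z) (ThetaHat b) = theta (hat_proj z b).
Proof.
case: b => s M /= XM; set a := hat_proj z (s, M).
rewrite -[RHS](mkseq_nth a) size_theta /Defs.ThetaHat -map_comp.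
apply/eq_in_map => j; rewrite mem_iota add0n => /= lt_j.
rewrite /hat_proj /= invMg permM -tauP //; congr (e _ (nat_of_ord _)).
by rewrite -[in LHS](sigma_tau XM lt_j ((s^-1)%g z)) permK.
Qed.

Lemma hatAlph_ThetaHat b b' : hatAlph b -> b' \in ThetaHat b -> hatAlph b'.
Proof.
case: b => s M [/= Gs XM] /mapP[j]; rewrite mem_iota add0n => lt_j -> /=.
split; last exact: isX_thetil_j.
rewrite groupM // mem_gen //; apply/imset2P; exists M (Ordinal lt_j) => //.
by rewrite inE pbT.
Qed.

End Construction.

Theorem mainTheorem17 (A : finType) (theta : A -> seq A) (lam c : nat)
  (a0 : A) (M0 : {set A}) (s0 : seq A) (k0 j0 : nat) :
  2 <= lam ->
  (forall a, size (theta a) = lam) ->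
  primitive theta ->
  injective theta ->
  infinite_set (Xsubst theta) ->
  is_c_theta theta lam c ->
  a0 \in M0 -> isX theta lam c M0 ->
  nth a0 (theta a0) 0 = a0 -> thetil_j theta M0 0 = M0 ->
  uniq s0 -> s0 =i M0 -> head a0 s0 = a0 ->
  0 < k0 -> j0 < lam ^ k0 ->
  (forall a, a \in M0 -> thpow theta k0 j0 a = a) ->
  (forall M, isX theta lam c M -> nth M (spow (thetil theta lam) k0 [:: M]) j0 = M0) ->
  top_factor
    (Xsub (@ThetaHat A theta lam c a0 s0 k0 j0) (@hatAlph A theta lam c a0 s0 k0 j0))
    (Xsubst theta).
Proof.
move=> _ size_theta prim _ _ c_theta a0M0 XM0 _ _ _ _ _ _ _ _ _.
have c_gt0 : 0 < c by case: XM0 => <- _; apply/card_gt0P; exists a0.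
set proj := hat_proj theta a0 s0 k0 j0 (Ordinal c_gt0).
apply: (@letter_map_top_factor _ _ _ _ _ proj _ _ (1%g, M0)) => //.
- by move=> b b'; apply: hatAlph_ThetaHat.
- by move=> b [_ Xb]; apply: hat_proj_ThetaHat.
- by split=> //; apply: group1.
Qed.
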